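(* Let $\Lambda$ be a strongly connected finite $k$-graph and let $M$ be the Borel probability measure on $\Lambda^\infty$ with $M(Z(\lambda))=\rho(\Lambda)^{-d(\lambda)}x^\Lambda_{s(\lambda)}$ for all $\lambda$. Suppose $g\in\mathbb{Z}^k\setminus\operatorname{Per}\Lambda$. Then there exist $a\in\mathbb{N}^k\setminus\{0\}$ and $0<K<1$ such that whenever $\mu,\nu\in\Lambda$ satisfy $s(\mu)=s(\nu)$ and $d(\mu)-d(\nu)=g$, we have for all $j\in\mathbb{N}$ \[M\Big(\bigcup_{\lambda\in s(\mu)\Lambda^{ja},\ \Lambda^{\min}(\mu\lambda,\nu\lambda)\neq\emptyset}Z(\mu\lambda)\Big)\le K^jM(Z(\mu)).\]
   Context: A $k$-graph is a countable category $\Lambda$ with a functor $d:\Lambda\to\mathbb{N}^k$ such that whenever $d(\lambda)=m+n$ there are unique $\mu,\nu$ with $d(\mu)=m$, $d(\nu)=n$, $\lambda=\mu\nu$. $\Lambda^n=d^{-1}(n)$, $\Lambda^0$ = vertices, $r,s$ range and source, $v\Lambda^n=\{\lambda\in\Lambda^n:r(\lambda)=v\}$. Standing convention: $\Lambda^{e_i}\neq\emptyset$ for each $i$. Finite: each $\Lambda^n$ finite; strongly connected: $v\Lambda w\neq\emptyset$ for all vertices. $\Lambda^{\min}(\mu,\nu)=\{(\alpha,\beta):\mu\alpha=\nu\beta,\ d(\mu\alpha)=d(\mu)\vee d(\nu)\}$. Coordinate matrices $A_i(v,w)=|v\Lambda^{e_i}w|$, $\rho(\Lambda)^n=\prod_i\rho(A_i)^{n_i}$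 (spectral radii). $x^\Lambda$ is the unique vector in $[0,\infty)^{\Lambda^0}$ with $\sum_vx^\Lambda_v=1$ and $A_ix^\Lambda=\rho(A_i)x^\Lambda$ for all $i$. Infinite paths: degree-preserving functors $x:\Omega_k\to\Lambda$, $\Omega_k=\{(m,n)\in\mathbb{N}^k\times\mathbb{N}^k:m\le n\}$ with $r(m,n)=(m,m)$, $s(m,n)=(n,n)$, $(m,n)(n,p)=(m,p)$, $d(m,n)=n-m$; $\Lambda^\infty$ their set, topologised by the compact open sets $Z(\lambda)=\{x:x(0,d(\lambda))=\lambda\}$; $\sigma^n(x)(p,q)=x(n+p,n+q)$. $\operatorname{Per}\Lambda=\{m-n:\sigma^m(x)=\sigma^n(x)\ \forall x\in\Lambda^\infty\}$. *)

From HB Require Import structures.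
From mathcomp Require Import all_boot all_order all_algebra.
From mathcomp Require Import finmap.
From mathcomp Require Import boolp classical_sets functions cardinality reals ereal.
From mathcomp Require Import topology sequences measure.
From mathcomp Require Import complex.

Set Implicit Arguments.
Unset Strict Implicit.
Unset Printing Implicit Defensive.

Import Order.TTheory GRing.Theory Num.Theory.
Local Open Scope classical_set_scope.
Local Open Scope ring_scope.

Definition vec (k : nat) := {ffun 'I_k -> nat}.
Definition zvec (k : nat) := {ffun 'I_k -> int}.

Definition vzero k : vec k := [ffun => 0%N].
Definition vadd k (m n : vec k) : vec k := [ffun i => (m i + n i)%N].
Definition vsubn k (n m : vec k) : vec k := [ffun i => (n i - m i)%N].
Definition vjoin k (m n : vec k) : vec k := [ffun i => maxn (m i) (n i)].
Definition vscale k (j : nat) (a : vec k) : vec k := [ffun i => (j * a i)%N].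
Definition vle k (m n : vec k) : bool := [forall i, (m i <= n i)%N].
Definition ve k (i : 'I_k) : vec k := [ffun l => (l == i : nat)].
Definition vsubz k (m n : vec k) : zvec k := [ffun i => (m i)%:Z - (n i)%:Z].

Lemma vle0 k (n : vec k) : vle (vzero k) n.
Proof. by apply/forallP => i; rewrite ffunE. Qed.

(* A k-graph is a countable category with a degree functor to N^k     *)
(* satisfying unique factorisation.  "Finite" means every Lambda^n is *)
(* finite; in particular the vertex set Lambda^0 is finite, so we take *)
(* the vertex type to be a finType.                                   *)
Record fin_kgraph (k : nat) := FinKGraph {
  vert : finType;
  mor : countType;
  kr : mor -> vert;
  ks : mor -> vert;
  kid : vert -> mor;
  kcomp : mor -> mor -> mor;         (* kcomp f g = f g, meaningful when ks f = kr g *)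
  kd : mor -> vec k;
  kr_id : forall v, kr (kid v) = v;
  ks_id : forall v, ks (kid v) = v;
  kr_comp : forall f g, ks f = kr g -> kr (kcomp f g) = kr f;
  ks_comp : forall f g, ks f = kr g -> ks (kcomp f g) = ks g;
  kid_l : forall f, kcomp (kid (kr f)) f = f;
  kid_r : forall f, kcomp f (kid (ks f)) = f;
  kcompA : forall f g h, ks f = kr g -> ks g = kr h ->
     kcomp (kcomp f g) h = kcomp f (kcomp g h);
  kd_id : forall v, kd (kid v) = vzero k;
  kd_comp : forall f g, ks f = kr g -> kd (kcomp f g) = vadd (kd f) (kd g);
  kfactor : forall (l : mor) (m n : vec k), kd l = vadd m n ->
     exists! p : mor * mor,
       [/\ ks p.1 = kr p.2, kd p.1 = m, kd p.2 = n & kcomp p.1 p.2 = l];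
  kfinite : forall n : vec k, finite_set [set l : mor | kd l = n];
  (* standing convention: Lambda^{e_i} is nonempty for each i *)
  knonempty : forall i : 'I_k, exists l : mor, kd l = ve i
}.

Arguments kr {k L} : rename.
Arguments ks {k L} : rename.
Arguments kid {k L} : rename.
Arguments kcomp {k L} : rename.
Arguments kd {k L} : rename.

Definition strongly_connected k (L : fin_kgraph k) : Prop :=
  forall v w : vert L, exists l : mor L, kr l = v /\ ks l = w.

Definition coordmx k (L : fin_kgraph k) (i : 'I_k) (v w : vert L) : nat :=
  #|` fset_set [set l : mor L | [/\ kr l = v, kd l = ve i & ks l = w]] |.

Definition specrad (R : realType) (V : finType) (A : V -> V -> nat) : R :=
  sup [set ComplexField.Normc.normc z | z in
        [set z : R[i] | root (char_poly
           (\matrix_(i < #|V|, j < #|V|) ((A (enum_val i) (enum_val j))%:R : R[i]))) z]].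

Arguments coordmx {k} L i v w.

Definition rhoL (R : realType) k (L : fin_kgraph k) (i : 'I_k) : R :=
  specrad R (coordmx L i).

Definition rho_pow (R : realType) k (L : fin_kgraph k) (n : vec k) : R :=
  \prod_(i < k) rhoL R L i ^+ n i.

Definition is_xLambda (R : realType) k (L : fin_kgraph k) (x : vert L -> R) : Prop :=
  [/\ forall v, 0 <= x v,
      \sum_(v : vert L) x v = 1 &
      forall i v, \sum_(w : vert L) (coordmx L i v w)%:R * x w = rhoL R L i * x v].

(* Infinite paths: degree-preserving functors Omega_k -> Lambda        *)
(* A morphism (m,n) of Omega_k (m <= n) is given with a proof of vle m n *)
(* (a boolean, so proofs are unique).                                  *)
Record ipath k (L : fin_kgraph k) := IPath {
  pf : forall m n : vec k, vle m n -> mor L;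
  pf_deg : forall m n (h : vle m n), kd (pf h) = vsubn n m;
  pf_r : forall m n (h : vle m n) (hm : vle m m), pf hm = kid (kr (pf h));
  pf_s : forall m n (h : vle m n) (hn : vle n n), pf hn = kid (ks (pf h));
  pf_comp : forall m n p (h1 : vle m n) (h2 : vle n p) (h3 : vle m p),
      ks (pf h1) = kr (pf h2) /\ kcomp (pf h1) (pf h2) = pf h3
}.

Arguments pf {k L} _ {m n}.

Definition cyl k (L : fin_kgraph k) (l : mor L) : set (ipath L) :=
  [set x | pf x (vle0 (kd l)) = l].

(* Per Lambda = { m - n | sigma^m x = sigma^n x for all x }, where      *)
(* sigma^n(x)(p,q) = x(n+p, n+q)                                        *)
Definition Per k (L : fin_kgraph k) : set (zvec k) :=
  [set g | exists m n : vec k, g = vsubz m n /\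
     forall (x : ipath L) (p q : vec k)
            (h1 : vle (vadd m p) (vadd m q)) (h2 : vle (vadd n p) (vadd n q)),
       pf x h1 = pf x h2].

Definition lmin_nonempty k (L : fin_kgraph k) (mu nu : mor L) : Prop :=
  exists al be : mor L,
    [/\ ks mu = kr al, ks nu = kr be, kcomp mu al = kcomp nu be &
        kd (kcomp mu al) = vjoin (kd mu) (kd nu)].

Definition bad_union k (L : fin_kgraph k) (mu nu : mor L) (j : nat) (a : vec k)
  : set (ipath L) :=
  [set x | exists l : mor L,
     [/\ kr l = ks mu, kd l = vscale j a,
         lmin_nonempty (kcomp mu l) (kcomp nu l) & cyl (kcomp mu l) x]].

(* Measures on the sigma-algebra generated by the cylinder sets         *)
(* (= the Borel sigma-algebra of Lambda^infty, since the Z(lambda) form *)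
(* a countable basis of the topology).                                 *)
Definition cylinders k (L : fin_kgraph k) : set (set (ipath L)) :=
  [set cyl l | l in [set: mor L]].

Arguments cylinders {k} L.

Definition is_measure_on (R : realType) (T : Type) (D : set (set T))
    (M : set T -> \bar R) : Prop :=
  [/\ M set0 = 0%E,
      forall A, D A -> (0 <= M A)%E &
      forall F : nat -> set T, (forall n, D (F n)) -> trivIset setT F ->
        D (\bigcup_n F n) ->
        (fun n => \sum_(i < n) M (F i))%E @ \oo --> M (\bigcup_n F n)].

Definition is_borel_prob (R : realType) k (L : fin_kgraph k)
    (M : set (ipath L) -> \bar R) : Prop :=
  is_measure_on <<s cylinders L >> M /\ M setT = 1%E.

(* Write g = gp - gm.  Since g is not a period, some path y0 has a window
   y0(0, T) whose two subwindows at offsets gp + p and gm + p differ.  By strong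
   connectivity every vertex w is the range of a block [blk w] of one fixed
   degree a that contains a copy of this window.  If lambda in s(mu) Lambda^{ja}
   has Lambda^min(mu lambda, nu lambda) nonempty, then a common extension of
   mu lambda and nu lambda identifies lambda with its own translate by
   d(mu) - d(nu) = g, and hence the two subwindows of any copy of the window
   inside lambda; so the paths of the union avoid [blk w] in each of the j
   consecutive blocks of degree a of lambda.  Avoiding the block at each step
   keeps at most a fraction K < 1 of the measure, where 1 - K bounds
   M(Z(blk w)) / M(Z(w)) from below. *)

From HB Require Import structures.
From mathcomp Require Import all_boot all_order all_algebra.
From mathcomp Require Import finmap.
From mathcomp Require Import boolp classical_sets functions cardinality reals ereal.
From mathcomp Require Import topology sequences measure.
From mathcomp Require Import complex.
From mathcomp Require Import zify lra.

Set Implicit Arguments.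
Unset Strict Implicit.
Unset Printing Implicit Defensive.

Import Order.TTheory GRing.Theory Num.Theory.
Local Open Scope classical_set_scope.
Local Open Scope ring_scope.

Section FiniteAdditivity.
Variables (R : realType) (T : Type) (G : set (set T)) (M : set T -> \bar R).
Hypothesis HM : is_measure_on <<s G >> M.
Local Notation D := <<s G >>.

Lemma sigma_algebra_setU A B : D A -> D B -> D (A `|` B).
Proof.
move=> DA DB; rewrite -bigcup2E; apply: sigma_algebra_bigcup => -[|[|n]] //=.
exact: sigma_algebra0.
Qed.

Lemma sigma_algebra_setD A B : D A -> D B -> D (A `\` B).
Proof.
move=> DA DB; have -> : A `\` B = setT `\` (setT `\` A `|` B).
  by rewrite !setTD setCU setCK setDE.
by apply: sigma_algebraCD; apply: sigma_algebra_setU => //; exact: sigma_algebraCD.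
Qed.

Lemma sigma_algebra_bigsetU (I : Type) (s : seq I) (P : pred I) (F : I -> set T) :
  (forall i, P i -> D (F i)) -> D (\big[setU/set0]_(i <- s | P i) F i).
Proof.
move=> DF; elim/big_rec: _ => [|i A Pi DA]; first exact: sigma_algebra0.
exact: sigma_algebra_setU (DF _ Pi) DA.
Qed.

Lemma measure_onU A B : D A -> D B -> A `&` B = set0 -> M (A `|` B) = (M A + M B)%E.
Proof.
move=> DA DB AB0; case: HM => M0 _ Madd.
have DAB : forall n, D (bigcup2 A B n).
  by move=> [|[|n]] //=; exact: sigma_algebra0.
have := Madd _ DAB; rewrite -trivIset_bigcup2 bigcup2E.
move=> /(_ AB0 (sigma_algebra_setU DA DB)) /cvg_lim <- //; apply: lim_near_cst => //.
near=> n; have n2 : (2 <= n)%N by near: n; exact: nbhs_infty_ge.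
rewrite -(subnK n2) addn2 !big_ord_recl big1 ?adde0 //.
Unshelve. all: by end_near.
Qed.

Lemma le_measure_on A B : D A -> D B -> A `<=` B -> (M A <= M B)%E.
Proof.
move=> DA DB AB; case: HM => _ Mge0 _.
have DBA : D (B `\` A) by exact: sigma_algebra_setD.
rewrite -(setDUK AB) measure_onU //; first by rewrite leeDl ?Mge0.
by rewrite setDE setICA setICr setI0.
Qed.

Lemma measure_on_bigsetU (I : choiceType) (s : seq I) (F : I -> set T) : uniq s ->
  (forall i, i \in s -> D (F i)) ->
  {in s &, forall i j, i != j -> F i `&` F j = set0} ->
  M (\big[setU/set0]_(i <- s) F i) = (\sum_(i <- s) M (F i))%E.
Proof.
elim: s => [|i s IHs] /= => [_ _ _|/andP [si us] DF disjF].
  by rewrite !big_nil; case: HM.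
have DFs j : j \in s -> D (F j) by move=> js; apply: DF; rewrite inE js orbT.
rewrite !big_cons measure_onU ?IHs //.
- by move=> j l js ls; apply: disjF; rewrite inE ?js ?ls orbT.
- by apply: DF; rewrite mem_head.
- by rewrite big_seq; exact: sigma_algebra_bigsetU.
rewrite -bigcup_seq setI_bigcupr; apply: bigcup0 => j js.
by apply: disjF; rewrite ?mem_head ?inE ?js ?orbT //; apply: contraNneq si => ->.
Qed.

End FiniteAdditivity.

Ltac vlia := repeat match goal with
  | |- context [@fun_of_fin ?T ?F ?ph ?f ?i] =>
      let t := fresh "t" in set t := @fun_of_fin T F ph f i; clearbody t
  end; intros; lia.
Ltac vext := apply/ffunP => ?; rewrite !ffunE; vlia.

Section Segments.
Variables (k : nat) (L : fin_kgraph k).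
Implicit Types (y z : ipath L) (m n p : vec k) (f g l : mor L).

Lemma vadd0n m : vadd (vzero k) m = m.
Proof. vext. Qed.

Lemma pf_eq y m n m' n' (h : vle m n) (h' : vle m' n') :
  m = m' -> n = n' -> pf y h = pf y h'.
Proof. by move=> em en; subst m' n'; rewrite (bool_irrelevance h h'). Qed.

Lemma vle_addr m n : vle m (vadd m n).
Proof. by apply/forallP => i; rewrite ffunE leq_addr. Qed.

(* [seg y m n] is the segment y(m, m + n) of the infinite path y. *)
Definition seg y m n : mor L := pf y (vle_addr m n).

Lemma kd_seg y m n : kd (seg y m n) = n.
Proof. by rewrite /seg pf_deg; vext. Qed.

Lemma pf_seg y m n (h : vle m n) : pf y h = seg y m (vsubn n m).
Proof.
apply: pf_eq => //; apply/ffunP => i.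
by move/forallP: h => /(_ i); rewrite !ffunE; vlia.
Qed.

Lemma ks_seg y m n p : ks (seg y m n) = kr (seg y (vadd m n) p).
Proof.
have h : vle m (vadd (vadd m n) p) by apply/forallP => i; rewrite !ffunE; vlia.
by case: (pf_comp y (vle_addr m n) (vle_addr (vadd m n) p) h).
Qed.

Lemma seg_comp y m n p :
  kcomp (seg y m n) (seg y (vadd m n) p) = seg y m (vadd n p).
Proof.
have h : vle m (vadd (vadd m n) p) by apply/forallP => i; rewrite !ffunE; vlia.
have [_ ->] := pf_comp y (vle_addr m n) (vle_addr (vadd m n) p) h.
by apply: pf_eq => //; vext.
Qed.

Lemma kr_seg y m n n' : kr (seg y m n) = kr (seg y m n').
Proof.
have hm : vle m m by apply/forallP.
by rewrite -[LHS]kr_id -[RHS]kr_id -!(pf_r y _ hm).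
Qed.

Lemma kcomp_inj f g f' g' : ks f = kr g -> ks f' = kr g' ->
  kd f = kd f' -> kd g = kd g' -> kcomp f g = kcomp f' g' -> f = f' /\ g = g'.
Proof.
move=> fg fg' df dg e.
have [[p1 p2] [_ uniq_p]] := kfactor (kd_comp fg).
have := uniq_p (f, g) (And4 fg erefl erefl erefl).
have := uniq_p (f', g') (And4 fg' (esym df) (esym dg) (esym e)).
by move=> -> [-> ->].
Qed.

Lemma cylE y l : cyl l y <-> seg y (vzero k) (kd l) = l.
Proof. by rewrite /cyl /= (pf_eq y _ (vle_addr _ _) erefl (esym (vadd0n _))). Qed.

Lemma kr_seg_cyl y f n : cyl f y -> kr (seg y (vzero k) n) = kr f.
Proof. by move=> /cylE yf; rewrite (kr_seg _ _ _ (kd f)) yf. Qed.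

Lemma ks_cyl y f n : cyl f y -> ks f = kr (seg y (kd f) n).
Proof. by move=> /cylE {1}<-; rewrite (ks_seg _ _ _ n) vadd0n. Qed.

Lemma cyl_kcomp y f g : ks f = kr g -> cyl (kcomp f g) y ->
  cyl f y /\ seg y (kd f) (kd g) = g.
Proof.
move=> fg /cylE; rewrite kd_comp // -seg_comp => e.
have [yf yg] := kcomp_inj (ks_seg _ _ _ _) fg (kd_seg _ _ _) (kd_seg _ _ _) e.
by rewrite vadd0n in yg; split => //; apply/cylE.
Qed.

Lemma cyl_seg_ext y f n : cyl f y -> cyl (kcomp f (seg y (kd f) n)) y.
Proof.
move=> yf; have /cylE e := yf; have fs := ks_cyl n yf.
by apply/cylE; rewrite kd_comp // kd_seg -seg_comp vadd0n e.
Qed.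

Lemma seg_split_inj y z m m' n p : seg y m (vadd n p) = seg z m' (vadd n p) ->
  seg y m n = seg z m' n /\ seg y (vadd m n) p = seg z (vadd m' n) p.
Proof. by rewrite -!seg_comp; apply: kcomp_inj; rewrite ?kd_seg //; exact: ks_seg. Qed.

Lemma seg_eq_window y z m m' q n p : seg y m q = seg z m' q ->
  vle (vadd n p) q -> seg y (vadd m n) p = seg z (vadd m' n) p.
Proof.
move=> e /forallP npq; have qE : q = vadd n (vadd p (vsubn q (vadd n p))).
  by apply/ffunP => t; have := npq t; rewrite !ffunE; vlia.
by move: e; rewrite qE => /seg_split_inj [_ /seg_split_inj []].
Qed.

End Segments.

Lemma vsubz_surj k (g : zvec k) : exists gp gm : vec k, g = vsubz gp gm.
Proof.
pose pos (z : int) := if z is Posz n then n else 0%N.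
pose neg (z : int) := if z is Negz n then n.+1 else 0%N.
exists [ffun t => pos (g t)], [ffun t => neg (g t)]; apply/ffunP => t.
by rewrite !ffunE; case: (g t) => n /=; rewrite ?subr0 ?NegzE ?sub0r.
Qed.

Lemma vsubz_eq k (m n m' n' : vec k) :
  vsubz m n = vsubz m' n' -> vadd m n' = vadd n m'.
Proof. by move=> /ffunP e; apply/ffunP => t; have := e t; rewrite !ffunE; vlia. Qed.

Lemma not_Per_witness k (L : fin_kgraph k) g gp gm : g = vsubz gp gm -> ~ Per L g ->
  exists (y : ipath L) p q, seg y (vadd gp p) q <> seg y (vadd gm p) q.
Proof.
move=> gE; apply: contra_notP => /forallNP same; exists gp, gm; split => // y p q hp hm.
have pq : vle p q.
  by apply/forallP => t; move/forallP: hp => /(_ t); rewrite !ffunE leq_add2l.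
have dE m : vsubn (vadd m q) (vadd m p) = vsubn q p by vext.
rewrite !pf_seg !dE; apply: contrapT => ne.
by apply: (same y); exists p, (vsubn q p).
Qed.

Lemma exists_contraction (R : realType) (I : finType) (c x : I -> R) :
  (forall i, 0 < c i) -> (forall i, x i <= 1) ->
  exists K, 0 < K < 1 /\ forall i, (1 - K) * x i <= c i.
Proof.
move=> c_gt0 x_le1; set S := \sum_i (c i)^-1; set e := (2 + S)^-1.
have S_ge0 : 0 <= S by apply: sumr_ge0 => i _; rewrite invr_ge0 ltW.
have eS : e * (2 + S) = 1 by rewrite mulVf //; apply: lt0r_neq0; lra.
have e_gt0 : 0 < e by rewrite invr_gt0; lra.
exists (1 - e); split; first by apply/andP; split; nra.
move=> i; have ci := c_gt0 i; have := x_le1 i.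
have : (c i)^-1 <= S.
  by rewrite /S (bigD1 i) //= lerDl sumr_ge0 // => j _; rewrite invr_ge0 ltW.
have : c i * (c i)^-1 = 1 by rewrite mulfV // gt_eqF.
have : 0 < (c i)^-1 by rewrite invr_gt0.
rewrite opprB addrC subrK; nra.
Qed.

Section Cylinders.
Variables (k : nat) (L : fin_kgraph k).
Implicit Types (f g l : mor L) (v w : vert L) (m n : vec k).
Local Notation D := <<s cylinders L >>.

Lemma cyl_measurable l : D (cyl l).
Proof. by apply: sub_sigma_algebra; exists l. Qed.

Definition vLambda v n : seq (mor L) :=
  enum_fset (fset_set [set l : mor L | kd l = n /\ kr l = v]).

Lemma mem_vLambda v n l : l \in vLambda v n <-> kd l = n /\ kr l = v.
Proof.
have fin : finite_set [set l : mor L | kd l = n /\ kr l = v].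
  by apply: sub_finite_set (@kfinite _ L n) => ? [].
by rewrite -[_ \in vLambda v n]/(l \in fset_set _) (in_fset_set fin) in_setE.
Qed.

Lemma vLambda_uniq v n : uniq (vLambda v n).
Proof. exact: fset_uniq. Qed.

Lemma cyl_partition f n :
  cyl f = \big[setU/set0]_(l <- vLambda (ks f) n) cyl (kcomp f l).
Proof.
rewrite -bigcup_seq; apply/seteqP; split => y.
- move=> yf; exists (seg y (kd f) n); last exact: cyl_seg_ext.
  by apply/mem_vLambda; rewrite kd_seg -ks_cyl.
- by move=> [l /mem_vLambda [_ lf] yfl]; case: (cyl_kcomp (esym lf) yfl).
Qed.

Lemma cyl_kcomp_disjoint f n : {in vLambda (ks f) n &, forall l l',
  l != l' -> cyl (kcomp f l) `&` cyl (kcomp f l') = set0}.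
Proof.
move=> l l' /mem_vLambda [dl fl] /mem_vLambda [dl' fl'] ll'.
apply/seteqP; split => y // [yl yl'].
have [_ el] := cyl_kcomp (esym fl) yl; have [_ el'] := cyl_kcomp (esym fl') yl'.
by move/eqP: ll'; rewrite -el -el' dl dl'.
Qed.

Lemma bad_union_measurable mu nu j a : D (bad_union mu nu j a).
Proof.
suff -> : bad_union mu nu j a = \big[setU/set0]_(l <- vLambda (ks mu) (vscale j a) |
    `[< lmin_nonempty (kcomp mu l) (kcomp nu l) >]) cyl (kcomp mu l).
  by apply: sigma_algebra_bigsetU => l _; exact: cyl_measurable.
rewrite -bigcup_seq_cond; apply/seteqP; split => y.
- move=> [l [lr ld lmin yl]]; exists l => //=.
  by rewrite asboolT // andbT; apply/mem_vLambda.
- by move=> [l /= /andP [/mem_vLambda [ld lr] /asboolP lmin] yl]; exists l.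
Qed.

Variables (a : vec k) (blk : vert L -> mor L).

(* [avoid j f]: the paths of Z(f) in which none of the j consecutive blocks
   of degree a following f is the block [blk w] at its range w. *)
Fixpoint avoid (j : nat) f : set (ipath L) :=
  if j is j'.+1 then
    \big[setU/set0]_(l <- vLambda (ks f) a | l != blk (ks f)) avoid j' (kcomp f l)
  else cyl f.

Lemma avoid_sub_cyl j f : avoid j f `<=` cyl f.
Proof.
elim: j f => [|j IHj] f //=.
rewrite -bigcup_seq_cond => y [l /= /andP [/mem_vLambda [_ lf] _]].
by move=> /IHj /(cyl_kcomp (esym lf)) [].
Qed.

Lemma avoid_measurable j f : D (avoid j f).
Proof.
elim: j f => [|j IHj] f /=; first exact: cyl_measurable.
by apply: sigma_algebra_bigsetU => l _; exact: IHj.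
Qed.

Lemma mem_avoid j f y : cyl f y ->
  (forall i, (i < j)%N ->
     let b := seg y (vadd (kd f) (vscale i a)) a in b != blk (kr b)) ->
  avoid j f y.
Proof.
elim: j f => [|j IHj] f yf //= yb; rewrite -bigcup_seq_cond.
have e0 : vadd (kd f) (vscale 0 a) = kd f by vext.
exists (seg y (kd f) a).
  apply/andP; split; first by apply/mem_vLambda; rewrite kd_seg -ks_cyl.
  by rewrite (ks_cyl a yf); have := yb 0%N isT; rewrite /= e0.
apply: IHj => [|i ij]; first exact: cyl_seg_ext.
have -> : vadd (kd (kcomp f (seg y (kd f) a))) (vscale i a) =
          vadd (kd f) (vscale i.+1 a).
  by rewrite kd_comp -?ks_cyl // kd_seg; apply/ffunP => t; rewrite !ffunE mulSn; vlia.
exact: yb.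
Qed.

End Cylinders.

Definition rho_inv (R : realType) k (L : fin_kgraph k) (n : vec k) : R :=
  (rho_pow R L n)^-1.

Definition cyl_mass (R : realType) k (L : fin_kgraph k) (x : vert L -> R)
  (l : mor L) : R := rho_inv R L (kd l) * x (ks l).

Section CylinderMeasure.
Variables (R : realType) (k : nat) (L : fin_kgraph k) (x : vert L -> R)
  (M : set (ipath L) -> \bar R).
Hypotheses (L_sc : strongly_connected L) (xL : is_xLambda x)
  (M_measure : is_measure_on <<s cylinders L >> M)
  (M_cyl : forall l, M (cyl l) = (cyl_mass x l)%:E).
Implicit Types (f g l : mor L) (v w : vert L) (m n : vec k).
Local Notation rho_inv := (rho_inv R L).
Local Notation mass := (cyl_mass x).

Lemma rho_invD m n : rho_inv (vadd m n) = rho_inv m * rho_inv n.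
Proof.
rewrite /rho_inv /rho_pow -invfM -big_split /=; congr (_^-1).
by apply: eq_bigr => i _; rewrite ffunE exprD.
Qed.

Lemma rho_inv0 : rho_inv (vzero k) = 1.
Proof. by rewrite /rho_inv /rho_pow big1 ?invr1 // => i _; rewrite ffunE expr0. Qed.

Lemma rho_inv_ve i : rho_inv (ve i) = (rhoL R L i)^-1.
Proof.
rewrite /rho_inv /rho_pow (bigD1 i) //= big1 ?mulr1 => [|j ji].
  by rewrite ffunE eqxx expr1.
by rewrite ffunE (negbTE ji) expr0.
Qed.

Lemma mass_kcomp f g : ks f = kr g -> mass (kcomp f g) = rho_inv (kd f) * mass g.
Proof. by move=> fg; rewrite /cyl_mass kd_comp // ks_comp // rho_invD mulrA. Qed.

Lemma mass_kid v : mass (kid v) = x v.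
Proof. by rewrite /cyl_mass kd_id ks_id rho_inv0 mul1r. Qed.

Lemma mass_partition f n : mass f = \sum_(l <- vLambda (ks f) n) mass (kcomp f l).
Proof.
apply: EFin_inj; rewrite -M_cyl (cyl_partition f n) (measure_on_bigsetU M_measure).
- by rewrite -sumEFin; apply: eq_bigr => l _; rewrite M_cyl.
- exact: vLambda_uniq.
- by move=> l _; exact: cyl_measurable.
- exact: cyl_kcomp_disjoint.
Qed.

Lemma x_ge0 v : 0 <= x v.
Proof. by case: xL. Qed.

Lemma x_le1 v : x v <= 1.
Proof.
case: xL => _ <- _; rewrite (bigD1 v) //= lerDl.
by apply: sumr_ge0 => w _; exact: x_ge0.
Qed.

Lemma exists_x_gt0 : exists v, 0 < x v.
Proof.
apply: contrapT => /forallNP x0; case: xL => _ + _.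
rewrite big1 => [/eqP|v _]; first by rewrite eq_sym oner_eq0.
by apply/eqP; rewrite eq_le x_ge0 andbT leNgt; apply/negP/x0.
Qed.

(* Splitting Z(v) along v Lambda^{e_i} makes x v > 0 a nonnegative multiple
   of rho(A_i)^-1. *)
Lemma rho_inv_ve_gt0 i : 0 < (rhoL R L i)^-1.
Proof.
have [v xv] := exists_x_gt0.
have xvE : x v = (rhoL R L i)^-1 * \sum_(l <- vLambda v (ve i)) x (ks l).
  rewrite -mass_kid (mass_partition _ (ve i)) ks_id mulr_sumr.
  apply: eq_big_seq => l /mem_vLambda [dl vl].
  by rewrite mass_kcomp ?ks_id // kd_id rho_inv0 mul1r /cyl_mass dl rho_inv_ve.
have : 0 <= \sum_(l <- vLambda v (ve i)) x (ks l).
  by apply: sumr_ge0 => l _; exact: x_ge0.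
by move: xv; rewrite xvE; nra.
Qed.

Lemma rho_inv_gt0 n : 0 < rho_inv n.
Proof.
rewrite /rho_inv invr_gt0 /rho_pow; apply: prodr_gt0 => i _; apply: exprn_gt0.
by rewrite -invr_gt0; exact: rho_inv_ve_gt0.
Qed.

Lemma x_gt0 w : 0 < x w.
Proof.
have [v xv] := exists_x_gt0; have [l [lw lv]] := L_sc w v.
have wl : ks (kid w) = kr l by rewrite ks_id lw.
have sub : cyl l `<=` cyl (kid w).
  by move=> y; rewrite -{1}(kid_l l) lw => /(cyl_kcomp wl) [].
have := le_measure_on M_measure (cyl_measurable l) (cyl_measurable (kid w)) sub.
rewrite !M_cyl lee_fin mass_kid; apply: lt_le_trans.
by rewrite /cyl_mass lv mulr_gt0 ?rho_inv_gt0.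
Qed.

Lemma mass_gt0 l : 0 < mass l.
Proof. by rewrite mulr_gt0 ?rho_inv_gt0 ?x_gt0. Qed.

Lemma cyl_nonempty l : exists y, cyl l y.
Proof.
apply: contrapT => /forallNP l0.
have l_empty : cyl l = set0 by apply/seteqP; split => y // /l0.
have := M_cyl l; rewrite l_empty; case: M_measure => -> _ _ [/esym m0].
by have := mass_gt0 l; rewrite m0 ltxx.
Qed.

Lemma measure_avoid_le a (blk : vert L -> mor L) K :
  (forall w, kd (blk w) = a) -> (forall w, kr (blk w) = w) -> 0 <= K ->
  (forall w, (1 - K) * x w <= mass (blk w)) ->
  forall j f, (M (avoid a blk j f) <= (K ^+ j * mass f)%:E)%E.
Proof.
move=> kd_blk kr_blk K_ge0 mass_blk; elim=> [|j IHj] f /=.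
  by rewrite M_cyl expr0 mul1r.
have blk_f : blk (ks f) \in vLambda (ks f) a by apply/mem_vLambda.
rewrite -big_filter (measure_on_bigsetU M_measure) ?filter_uniq ?vLambda_uniq //;
  first last.
- move=> l l'; rewrite !mem_filter => /andP [_ ls] /andP [_ l's] ll'.
  apply/seteqP; split => y // [/avoid_sub_cyl yl /avoid_sub_cyl yl'].
  by rewrite -(cyl_kcomp_disjoint ls l's ll').
- by move=> l _; exact: avoid_measurable.
apply: le_trans.
  by apply: (@lee_sum _ _ _ (fun l => (K ^+ j * mass (kcomp f l))%:E)) => l _; exact: IHj.
rewrite sumEFin lee_fin -mulr_sumr exprSr -mulrA ler_wpM2l ?exprn_ge0 // big_filter.
have : (1 - K) * mass f <= mass (kcomp f (blk (ks f))).
  rewrite mass_kcomp ?kr_blk // /cyl_mass mulrCA ler_wpM2l ?mass_blk //.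
  exact/ltW/rho_inv_gt0.
have := mass_partition f a; rewrite (bigD1_seq _ blk_f) ?vLambda_uniq //=.
lra.
Qed.

Lemma exists_blocks (tau : mor L) :
  exists a (blk : vert L -> mor L) (o : vert L -> vec k),
  [/\ forall w, kd (blk w) = a, forall w, kr (blk w) = w,
      forall w t, (o w t + kd tau t < a t)%N &
      forall w y s, seg y s a = blk w -> seg y (vadd s (o w)) (kd tau) = tau].
Proof.
have [c cP] := choice (fun w => L_sc w (kr tau)).
have [z zP] := choice (fun w => cyl_nonempty (kcomp (c w) tau)).
have zc w : cyl (c w) (z w) by case: (cyl_kcomp (cP w).2 (zP w)).
have ztau w : seg (z w) (kd (c w)) (kd tau) = tau by case: (cyl_kcomp (cP w).2 (zP w)).
pose a : vec k := [ffun t => (\sum_w kd (c w) t + kd tau t).+1].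
have room w t : (kd (c w) t + kd tau t < a t)%N.
  by rewrite ffunE ltnS leq_add2r (bigD1 w) //= leq_addr.
exists a, (fun w => seg (z w) (vzero k) a), (fun w => kd (c w)); split => //.
- by move=> w; rewrite kd_seg.
- by move=> w; rewrite (kr_seg_cyl _ (zc w)) (cP w).1.
- move=> w y s /seg_eq_window -> //; first by rewrite vadd0n ztau.
  by apply/forallP => t; rewrite ffunE ltnW.
Qed.

Lemma bad_union_sub_avoid (y0 : ipath L) (gp gm p q a : vec k)
    (blk : vert L -> mor L) (o : vert L -> vec k) :
  let T := vadd (vadd gp gm) (vadd p q) in
  seg y0 (vadd gp p) q <> seg y0 (vadd gm p) q ->
  (forall w t, (o w t + T t < a t)%N) ->
  (forall w y s, seg y s a = blk w -> seg y (vadd s (o w)) T = seg y0 (vzero k) T) ->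
  forall mu nu, ks mu = ks nu -> vadd (kd mu) gm = vadd (kd nu) gp ->
  forall j, bad_union mu nu j a `<=` avoid a blk j mu.
Proof.
move=> T y0_gap room blk_tau mu nu munu dmunu j y [l [lr ld lmin yl]].
have [ymu yl_seg] := cyl_kcomp (esym lr) yl.
apply: mem_avoid => // i ij; apply/negP => /eqP /blk_tau ytau.
set w := kr _ in ytau; set s := vadd (vadd (kd mu) (vscale i a)) (o w) in ytau.
case: lmin => al [be [al_r be_r e _]].
have [z zl_al] := cyl_nonempty (kcomp (kcomp mu l) al).
have zl_mu : seg z (kd mu) (kd l) = l.
  by have [/(cyl_kcomp (esym lr)) []] := cyl_kcomp al_r zl_al.
have zl_nu : seg z (kd nu) (kd l) = l.
  have nul : ks nu = kr l by rewrite -munu.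
  by move: zl_al; rewrite e => /(cyl_kcomp be_r) [/(cyl_kcomp nul) []].
pose X u := vadd (vadd (vscale i a) (o w)) (vadd u p).
have fits (u : vec k) : (forall t, u t <= gp t + gm t)%N -> vle (vadd (X u) q) (kd l).
  move=> u_le; apply/forallP => t; have := room w t; have := u_le t.
  have := leq_mul ij (leqnn (a t)); rewrite ld !ffunE mulSn; vlia.
have in_tau (u : vec k) : (forall t, u t <= gp t + gm t)%N ->
    seg y (vadd (kd mu) (X u)) q = seg y0 (vadd u p) q.
  move=> u_le; have -> : vadd (kd mu) (X u) = vadd s (vadd u p) by vext.
  rewrite (seg_eq_window ytau) ?vadd0n //.
  by apply/forallP => t; have := u_le t; rewrite !ffunE; vlia.
have gp_le t : (gp t <= gp t + gm t)%N by rewrite leq_addr.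
have gm_le t : (gm t <= gp t + gm t)%N by rewrite leq_addl.
have yz : seg y (kd mu) (kd l) = seg z (kd mu) (kd l) by rewrite yl_seg zl_mu.
apply: y0_gap; rewrite -(in_tau gp) // -(in_tau gm) //.
rewrite (seg_eq_window yz (fits gp gp_le)) (seg_eq_window yz (fits gm gm_le)).
have -> : vadd (kd mu) (X gm) = vadd (kd nu) (X gp).
  by apply/ffunP => t; have := congr1 (fun v : vec k => v t) dmunu; rewrite !ffunE; vlia.
exact: seg_eq_window (etrans zl_mu (esym zl_nu)) (fits gp gp_le).
Qed.

End CylinderMeasure.

Theorem lemma8p4 (R : realType) (k : nat) (L : fin_kgraph k)
  (x : vert L -> R) (M : set (ipath L) -> \bar R) (g : zvec k) :
  strongly_connected L ->
  is_xLambda x ->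
  is_borel_prob M ->
  (forall l : mor L, M (cyl l) = ((rho_pow R L (kd l))^-1 * x (ks l))%:E) ->
  ~ Per L g ->
  exists a : vec k, a != vzero k /\
    exists K : R, 0 < K < 1 /\
      forall mu nu : mor L, ks mu = ks nu -> vsubz (kd mu) (kd nu) = g ->
        forall j : nat,
          (M (bad_union mu nu j a) <= (K ^+ j)%:E * M (cyl mu))%E.
Proof.
move=> L_sc xL [M_measure _] M_cyl notPer.
have [gp [gm gE]] := vsubz_surj g.
have [y0 [p [q y0_gap]]] := not_Per_witness gE notPer.
have [t0 _] : exists t : 'I_k, True.
  apply: contrapT => /forallNP no_t; apply: y0_gap.
  by congr (seg _ (vadd _ _) _); apply/ffunP => t; case: (no_t t).
set tau := seg y0 (vzero k) (vadd (vadd gp gm) (vadd p q)).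
have [a [blk [o [kd_blk kr_blk room blk_tau]]]] :=
  exists_blocks L_sc xL M_measure M_cyl tau.
rewrite kd_seg in room blk_tau.
have [K [/andP [K_gt0 K_lt1] mass_blk]] := exists_contraction
  (fun w => mass_gt0 L_sc xL M_measure M_cyl (blk w)) (x_le1 xL).
exists a; split.
  by apply/eqP => /ffunP /(_ t0); rewrite ffunE; have := room (kr tau) t0; vlia.
exists K; split => [|mu nu munu]; first by apply/andP.
rewrite gE => /vsubz_eq dmunu j.
have bad_avoid := bad_union_sub_avoid L_sc xL M_measure M_cyl y0_gap room blk_tau munu.
apply: le_trans (le_measure_on M_measure (bad_union_measurable _ _ _ _)
  (avoid_measurable _ _ _ _) (bad_avoid dmunu j)) _.
rewrite M_cyl -EFinM; apply: measure_avoid_le => //; exact: ltW.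
Qed.
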